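(* Let $\mathcal{A}=M_{n_1}\oplus\cdots\oplus M_{n_d}$, viewed as the block-diagonal subalgebra of $M_m$ with $m=n_1+\cdots+n_d$, let $\tau$ be a completely positive map on $\mathcal{A}$ and $\widetilde{\tau}$ its canonical extension to $M_m$. The following are equivalent: (1) $\tau$ is irreducible; (2) $\widetilde{\tau}$ is irreducible; (3) there exist $A_1,\dots,A_p\in M_m$ generating $M_m$ as an algebra such that $\widetilde{\tau}(X)=\sum_{i=1}^pA_i^*XA_i$ for all $X\in M_m$ (in particular $\tau(X)=\sum_{i=1}^pA_i^*XA_i$ for all $X\in\mathcal{A}$); (4) there exist $A_1,\dots,A_p\in M_m$ generating $M_m$ as an algebra such that $\tau(X)=\sum_{i=1}^pA_i^*XA_i$ for all $X\in\mathcal{A}$.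
   Context: The canonical extension is $\widetilde{\tau}=\iota\circ\tau\circ\phi$, where $\iota:\mathcal{A}\hookrightarrow M_m$ is the block-diagonal embedding and $\phi:M_m\to\mathcal{A}$ maps a block matrix $(X_{ij})$ to its block-diagonal part $X_{11}\oplus\cdots\oplus X_{dd}$. A positive map $\varphi$ on a finite dimensional $C^*$-algebra $\mathcal{B}$ is irreducible if there is no projection $p\in\mathcal{B}$, $p\ne0,1$, with $\varphi(p\mathcal{B}p)\subseteq p\mathcal{B}p$. *)

From HB Require Import structures.
From mathcomp Require Import all_boot all_order all_algebra.
Set Implicit Arguments. Unset Strict Implicit. Unset Printing Implicit Defensive.
Import Order.TTheory GRing.Theory Num.Theory.
Local Open Scope ring_scope.

Section Defs.
Variable C : numClosedFieldType.

Definition adjmx {k l : nat} (M : 'M[C]_(k, l)) : 'M[C]_(l, k) :=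
  (map_mx (fun x => x^*) M)^T.

Definition psdmx {k : nat} (M : 'M[C]_k) : Prop :=
  exists Y : 'M[C]_k, M = adjmx Y *m Y.

Definition projmx {k : nat} (P : 'M[C]_k) : Prop :=
  adjmx P = P /\ P *m P = P.

Variable d : nat.
Variable n : 'I_d -> nat.
Local Notation m := (\sum_(i < d) n i)%N.

(* phi : M_m -> A, the block-diagonal part X_11 + ... + X_dd
   (composed with the inclusion iota into M_m) *)
Definition blockdiag_part (X : 'M[C]_m) : 'M[C]_m :=
  \mxdiag_(i < d) submxblock X i i.

(* A = M_{n_1} (+) ... (+) M_{n_d}, as block-diagonal subalgebra of M_m *)
Definition in_blockdiag (X : 'M[C]_m) : Prop := blockdiag_part X = X.

(* completely positive on A: for all k, id_k (x) tau is positive on M_k(A) *)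
Definition completely_positive_on (B : 'M[C]_m -> Prop)
    (f : 'M[C]_m -> 'M[C]_m) : Prop :=
  forall (k : nat) (X : 'I_k -> 'I_k -> 'M[C]_m),
    (forall a b, B (X a b)) ->
    psdmx (\mxblock_(a < k, b < k) X a b) ->
    psdmx (\mxblock_(a < k, b < k) f (X a b)).

Definition irreducible_on (B : 'M[C]_m -> Prop) (f : 'M[C]_m -> 'M[C]_m) : Prop :=
  ~ exists P : 'M[C]_m,
      [/\ B P, projmx P, P <> 0, P <> 1%:M &
          forall X, B X -> exists Y, B Y /\ f (P *m X *m P) = P *m Y *m P].

Definition generates_full {k p : nat} (A : 'I_p -> 'M[C]_k) : Prop :=
  forall S : 'M[C]_k -> Prop,
    S 1%:M ->
    (forall x y, S x -> S y -> S (x + y)) ->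
    (forall x y, S x -> S y -> S (x *m y)) ->
    (forall (c : C) x, S x -> S (c *: x)) ->
    (forall i, S (A i)) ->
    forall X, S X.

End Defs.

(* Complete positivity of tau gives, by Choi's theorem, Kraus operators K_r with
   tau (blk_part X) = sum_r K_r^* X K_r; since tau preserves the block algebra,
   the cuts E_j K_r E_l by the block projections E_j are Kraus operators too.
   Given a nontrivial subspace V of row vectors invariant under all cuts, the
   least subspace containing V and the largest one inside V that are stable
   under every E_j are invariant as well; unless all cuts vanish, one of them
   is proper and nonzero, and its orthogonal projection lies in the block
   algebra and reduces tau.  So for irreducible tau the cuts generate M_m, by
   Burnside's theorem.  Conversely, if generators A_i give
   tau X = sum_i A_i^* X A_i on the block algebra and tau (P A P) <= P A P for
   a projection P, then P A_i (1 - P) = 0 for all i, hence P X (1 - P) = 0 for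
   all X, and P is 0 or 1. *)

From HB Require Import structures.
From mathcomp Require Import all_boot all_order all_algebra.
From Stdlib Require Import Classical.
From mathcomp Require Import zify.
Set Implicit Arguments. Unset Strict Implicit. Unset Printing Implicit Defensive.
Import Order.TTheory GRing.Theory Num.Theory.
Local Open Scope ring_scope.

Section Adjoint.
Variable C : numClosedFieldType.

Lemma adjmxE k l (M : 'M[C]_(k, l)) i j : adjmx M i j = (M j i)^*.
Proof. by rewrite /adjmx !mxE. Qed.

Lemma adjmxK k l (M : 'M[C]_(k, l)) : adjmx (adjmx M) = M.
Proof. by apply/matrixP=> i j; rewrite !adjmxE conjCK. Qed.

Lemma adjmxM k l r (A : 'M[C]_(k, l)) (B : 'M[C]_(l, r)) :
  adjmx (A *m B) = adjmx B *m adjmx A.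
Proof.
apply/matrixP=> i j; rewrite adjmxE !mxE rmorph_sum; apply: eq_bigr => s _.
by rewrite !adjmxE rmorphM mulrC.
Qed.

Lemma adjmxB k l (A B : 'M[C]_(k, l)) : adjmx (A - B) = adjmx A - adjmx B.
Proof. by apply/matrixP=> i j; rewrite !adjmxE !mxE rmorphB. Qed.

Lemma adjmx0 k l : adjmx (0 : 'M[C]_(k, l)) = 0.
Proof. by apply/matrixP=> i j; rewrite adjmxE !mxE rmorph0. Qed.

Lemma adjmx1 k : adjmx (1%:M : 'M[C]_k) = 1%:M.
Proof.
apply/matrixP=> i j; rewrite adjmxE !mxE eq_sym.
by case: eqP; rewrite ?rmorph1 ?rmorph0.
Qed.

Lemma adjmx_delta k l (i : 'I_k) (j : 'I_l) :
  adjmx (delta_mx i j : 'M[C]_(k, l)) = delta_mx j i.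
Proof.
apply/matrixP=> a b; rewrite adjmxE !mxE.
by case: (a == j); case: (b == i); rewrite ?rmorph0 ?rmorph1.
Qed.

Lemma adjmx_invmx k (A : 'M[C]_k) : adjmx (invmx A) = invmx (adjmx A).
Proof. by rewrite /adjmx map_invmx trmx_inv. Qed.

Lemma sum_adjmx_mul_eq0 k l (I : finType) (B : I -> 'M[C]_(k, l)) :
  \sum_i adjmx (B i) *m B i = 0 -> forall i, B i = 0.
Proof.
move=> sum0 i; apply/matrixP=> r s; rewrite mxE.
have diagE j : (adjmx (B j) *m B j) s s = \sum_r `|B j r s| ^+ 2.
  by rewrite mxE; apply: eq_bigr => r' _; rewrite adjmxE normCK mulrC.
have /eqP : (\sum_j adjmx (B j) *m B j) s s = 0 by rewrite sum0 mxE.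
rewrite summxE (eq_bigr _ (fun j _ => diagE j)).
rewrite psumr_eq0 => [/allP/(_ i (mem_index_enum i))|j _]; last first.
  by rewrite sumr_ge0 // => r' _; rewrite exprn_ge0.
rewrite implyTb psumr_eq0 => [/allP/(_ r (mem_index_enum r))|r' _]; last first.
  by rewrite exprn_ge0.
by rewrite implyTb sqrf_eq0 normr_eq0 => /eqP.
Qed.

Lemma adjmx_mul_eq0 k l (Y : 'M[C]_(k, l)) : adjmx Y *m Y = 0 -> Y = 0.
Proof.
move=> Y0; have := @sum_adjmx_mul_eq0 _ _ 'I_1 (fun _ => Y).
by rewrite big_ord1 => /(_ Y0 ord0).
Qed.

End Adjoint.

Lemma mx_nz_entry (R : nmodType) k l (A : 'M[R]_(k, l)) :
  A != 0 -> exists i j, A i j != 0.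
Proof.
move=> A0; have /existsP [i /existsP [j Aij]] : [exists i, exists j, A i j != 0].
  apply: contraNT A0 => /existsPn noA; apply/eqP/matrixP => i j.
  by move/existsPn: (noA i) => /(_ j) /negbNE /eqP ->; rewrite mxE.
by exists i, j.
Qed.

Lemma mx_nz_row (R : nmodType) k l (A : 'M[R]_(k, l)) :
  A != 0 -> exists i, row i A != 0.
Proof.
move=> /mx_nz_entry [i [j Aij]]; exists i.
by apply: contra_neq Aij => /rowP/(_ j); rewrite !mxE.
Qed.

Section Subspaces.
Variables (C : numClosedFieldType) (k : nat).

Definition subspace (P : 'rV[C]_k -> Prop) :=
  [/\ P 0, forall u v, P u -> P v -> P (u + v) & forall c v, P v -> P (c *: v)].

Lemma subspace_mx P :
  subspace P -> exists W : 'M[C]_k, forall v, (v <= W)%MS <-> P v.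
Proof.
case=> P0 PD PZ.
suff grow r (W : 'M[C]_k) :
    (forall v, (v <= W)%MS -> P v) -> (k - \rank W <= r)%N ->
    exists W : 'M[C]_k, forall v, (v <= W)%MS <-> P v.
  by apply: (grow k 0) => [v|]; [rewrite submx0 => /eqP -> | rewrite leq_subr].
elim: r W => [|r IH] W WP rW.
  exists W => v; split=> [|_]; first exact: WP.
  by apply: submx_full; rewrite /row_full eqn_leq rank_leq_col; lia.
have [PW|] := classic (forall v, P v -> (v <= W)%MS).
  by exists W => v; split; [exact: WP | exact: PW].
move=> /not_all_ex_not [v notPW]; have [Pv vW] := imply_to_and _ _ notPW.
apply: (IH (W + v)%MS).
  move=> u /sub_addsmxP [[a b] ->] /=.
  apply: PD; first exact/WP/submxMl.
  by rewrite [b]mx11_scalar mul_scalar_mx; apply: PZ.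
have : (\rank W < \rank (W + v))%N.
  apply: rank_ltmx; rewrite ltmxE addsmxSl /=; apply/negP => sub.
  by apply: vW; apply: submx_trans sub; exact: addsmxSr.
by have := rank_leq_col (W + v)%MS; lia.
Qed.

Lemma subspace_full_of_annihilator P : subspace P ->
  (forall w : 'rV[C]_k, (forall v, P v -> w *m v^T = 0) -> w = 0) ->
  forall v, P v.
Proof.
move=> sP ann; have [W WP] := subspace_mx sP.
have ker0 : kermx W^T = 0.
  apply/row_matrixP => z; rewrite row0; apply: ann => v /WP /submxP [D ->].
  by rewrite trmx_mul mulmxA -row_mul mulmx_ker row0 mul0mx.
move=> v; apply/WP/submx_full.
by move/eqP: ker0; rewrite kermx_eq0 /row_free mxrank_tr.
Qed.

Lemma subspace_nontrivial_dim P (v y : 'rV[C]_k) :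
  subspace P -> P v -> v != 0 -> ~ P y -> (1 < k)%N.
Proof.
case=> _ _ PZ Pv v0 Py; rewrite ltnNge; apply/negP => k1; apply: Py.
have /submxP [a ->] : (y <= v)%MS.
  apply: submx_full; rewrite /row_full eqn_leq rank_leq_col /=.
  by apply: leq_trans k1 _; rewrite lt0n mxrank_eq0.
by rewrite [a]mx11_scalar mul_scalar_mx; apply: PZ.
Qed.

Definition is_orthoproj (W Q : 'M[C]_k) :=
  [/\ adjmx Q = Q, Q *m Q = Q, (Q <= W)%MS &
      forall l (A : 'M[C]_(l, k)), (A <= W)%MS -> A *m Q = A].

Lemma orthoproj_exists (W : 'M[C]_k) : exists Q, is_orthoproj W Q.
Proof.
move: (row_base W) (row_base_free W) (eq_row_base W) => B Bfree eqB.
set G := B *m adjmx B.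
have Gu : G \in unitmx.
  rewrite -row_free_unit -kermx_eq0; apply/eqP/row_matrixP=> i.
  rewrite row0; set x := row i (kermx G).
  have xG : x *m G = 0 by rewrite /x -row_mul mulmx_ker row0.
  have : adjmx (adjmx (x *m B)) *m adjmx (x *m B) = 0.
    by rewrite adjmxK adjmxM mulmxA -(mulmxA x) xG mul0mx.
  move/adjmx_mul_eq0/(congr1 (@adjmx _ _ _)); rewrite adjmxK adjmx0 => /eqP.
  by rewrite mulmx_free_eq0 // => /eqP.
have adjG : adjmx G = G by rewrite /G adjmxM adjmxK.
have GVG : invmx G *m G = 1%:M /\ G *m invmx G = 1%:M by rewrite mulVmx ?mulmxV.
exists (adjmx B *m invmx G *m B); split.
- by rewrite !adjmxM adjmxK adjmx_invmx adjG mulmxA.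
- by rewrite -!mulmxA (mulmxA B) -/G (mulmxA (invmx G)) GVG.1 mul1mx.
- by rewrite -eqB submxMl.
- move=> l A; rewrite -eqB => /mulmxKpV <-.
  by rewrite -!mulmxA (mulmxA B) -/G (mulmxA G) GVG.2 mul1mx.
Qed.

Lemma orthoproj_stable W Q N : is_orthoproj W Q -> stablemx W N ->
  Q *m N *m Q = Q *m N.
Proof.
case=> _ _ QW QA WN; apply: QA.
by apply: submx_trans WN; apply: submxMr.
Qed.

Lemma orthoproj_stable_comm W Q N : is_orthoproj W Q -> adjmx N = N ->
  stablemx W N -> N *m Q = Q *m N.
Proof.
move=> oQ aN /(orthoproj_stable oQ) QNQ; have [aQ _ _ _] := oQ.
by have := congr1 (@adjmx _ _ _) QNQ; rewrite !adjmxM aQ aN -QNQ !mulmxA.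
Qed.

Lemma stable_eigenvector (T N : 'M[C]_k) : T != 0 -> stablemx T N ->
  exists w : 'rV[C]_k, exists l, [/\ (w <= T)%MS, w != 0 & w *m N = l *: w].
Proof.
move=> T0 TN; move: (row_base T) (row_base_free T) (eq_row_base T) => B Bfree eqB.
have BN : stablemx B N by rewrite (eqmxMr N eqB) eqB.
set NB := B *m N *m pinvmx B.
have eNB : B *m N = NB *m B by rewrite /NB mulmxKpV.
have [l /eigenvalueP [y yN y0]] : exists l, eigenvalue NB l.
  by apply: eigenvalue_closed; rewrite lt0n mxrank_eq0.
exists (y *m B), l; split.
- by rewrite -eqB submxMl.
- by rewrite mulmx_free_eq0.
- by rewrite -mulmxA eNB mulmxA yN scalemxAl.
Qed.

End Subspaces.

Section Burnside.
Variables (C : numClosedFieldType) (k : nat).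

Definition mx_generates (I : finType) (K : I -> 'M[C]_k) : Prop :=
  forall S : 'M[C]_k -> Prop, S 1%:M ->
    (forall x y, S x -> S y -> S (x + y)) ->
    (forall x y, S x -> S y -> S (x *m y)) ->
    (forall (c : C) x, S x -> S (c *: x)) ->
    (forall i, S (K i)) -> forall X, S X.

Definition no_invariant_subspace (I : finType) (K : I -> 'M[C]_k) : Prop :=
  forall P : 'rV[C]_k -> Prop, subspace P -> (forall v i, P v -> P (v *m K i)) ->
    (forall v, P v) \/ (forall v, P v -> v = 0).

Variables (I : finType) (K : I -> 'M[C]_k).
Hypothesis K_irr : no_invariant_subspace K.

Section Closure.
Variable S : 'M[C]_k -> Prop.
Hypotheses (S1 : S 1%:M) (SD : forall x y, S x -> S y -> S (x + y))
  (SM : forall x y, S x -> S y -> S (x *m y))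
  (SZ : forall (c : C) x, S x -> S (c *: x)) (SK : forall i, S (K i)).

Let S0 : S 0.
Proof. by rewrite -(scale0r 1%:M); apply: SZ. Qed.

Let SB x y : S x -> S y -> S (x - y).
Proof. by move=> Sx Sy; apply: SD => //; rewrite -scaleN1r; apply: SZ. Qed.

Lemma burnside_transitive (x : 'rV[C]_k) : x != 0 ->
  forall y, exists2 B, S B & x *m B = y.
Proof.
move=> x0 y; pose P v := exists2 B, S B & v = x *m B.
have sP : subspace P.
  split=> [|_ _ [B1 SB1 ->] [B2 SB2 ->]|c _ [B SB' ->]].
  - by exists 0; rewrite ?mulmx0.
  - by exists (B1 + B2); [apply: SD | rewrite mulmxDr].
  - by exists (c *: B); [apply: SZ | rewrite scalemxAr].
have PK v i : P v -> P (v *m K i).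
  by case=> B SB' ->; exists (B *m K i); [apply: SM | rewrite mulmxA].
have [/(_ y) [B SB' ->]|P0] := K_irr sP PK; first by exists B.
by case/eqP: x0; apply: P0; exists 1%:M; rewrite ?mulmx1.
Qed.

(* With row i T *m A = 'e_j and N = A *m T, an eigenvector w of N in the rows
   of T lies in the kernel of N - l, so T *m (N - l) has smaller rank; it is
   nonzero, as otherwise row j T = row i T *m N = l *: row i T. *)
Lemma burnside_rank_decr T : S T -> T != 0 -> \rank T != 1%N ->
  exists T', [/\ S T', T' != 0 & (\rank T' < \rank T)%N].
Proof.
move=> ST T0 rT1; have [i Ti0] := mx_nz_row T0.
have [j Tji] : exists j, ~~ (row j T <= row i T)%MS.
  apply/existsP; apply: contraNT rT1 => /existsPn Tsub.
  have sT : (T <= row i T)%MS by apply/row_subP => j; apply/negbNE/Tsub.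
  rewrite eqn_leq (leq_trans (mxrankS sT)) ?rank_leq_row //.
  by rewrite lt0n mxrank_eq0.
have [A SA eA] := burnside_transitive Ti0 (delta_mx 0 j).
set N := A *m T.
have TN : stablemx T N by rewrite /N mulmxA submxMl.
have [w [l [wT w0 wN]]] := stable_eigenvector T0 TN.
exists (T *m N - l *: T); split.
- by apply: SB; [apply: SM ST (SM SA ST) | apply: SZ].
- apply: contraNneq Tji => /eqP; rewrite subr_eq0 => /eqP TNl.
  have : row i T *m N = l *: row i T.
    by rewrite -row_mul TNl; apply/rowP => t; rewrite !mxE.
  by rewrite /N mulmxA eA -rowE => ->; apply: scalemx_sub.
- have -> : T *m N - l *: T = T *m (N - l%:M) by rewrite mulmxBr mul_mx_scalar.
  rewrite -(mxrank_mul_ker T (N - l%:M)) -{1}[\rank (T *m _)]addn0 ltn_add2l.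
  rewrite lt0n mxrank_eq0; apply: contraNneq w0 => cap0.
  rewrite -submx0 -cap0 sub_capmx wT; apply/sub_kermxP.
  by rewrite mulmxBr wN mul_mx_scalar subrr.
Qed.

Lemma burnside_rank1 : (0 < k)%N -> exists T, [/\ S T, T != 0 & \rank T = 1%N].
Proof.
move=> k_gt0.
suff rec r T : S T -> T != 0 -> (\rank T <= r)%N ->
    exists T, [/\ S T, T != 0 & \rank T = 1%N].
  by apply: (rec k 1%:M S1); rewrite ?rank_leq_col // -mxrank_eq0 mxrank1 -lt0n.
elim: r T => [|r IH] T ST T0 rT.
  by move: rT; rewrite leqn0 mxrank_eq0 (negbTE T0).
have [rT1|rT1] := eqVneq (\rank T) 1%N; first by exists T.
have [T' [ST' T'0 rT']] := burnside_rank_decr ST T0 rT1.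
by apply: IH ST' T'0 _; lia.
Qed.

(* The columns c with c *m y in S for all y form a K-stable space, nonzero as
   it contains the column of a rank-one element of S; its annihilator is then
   a K-invariant proper subspace, hence zero. *)
Lemma burnside_outer :
  (0 < k)%N -> forall (c : 'cV[C]_k) (y : 'rV[C]_k), S (c *m y).
Proof.
move=> k_gt0; have [T [ST T0 rT1]] := burnside_rank1 k_gt0.
have [u [w [Tuw u0 w0]]] :
    exists (u : 'cV_k) (w : 'rV_k), [/\ T = u *m w, u != 0 & w != 0].
  move: (col_base T) (row_base T) (mulmx_base T); rewrite rT1 => u w Tuw.
  exists u, w; split; first by rewrite Tuw.
    by apply: contraNneq T0 => u0; rewrite -Tuw u0 mul0mx.
  by apply: contraNneq T0 => w0; rewrite -Tuw w0 mulmx0.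
pose L (c : 'cV[C]_k) := forall y : 'rV[C]_k, S (c *m y).
have Lu : L u.
  move=> y; have [B SB' <-] := burnside_transitive w0 y.
  by rewrite mulmxA -Tuw; apply: SM.
have LK c i : L c -> L (K i *m c) by move=> Lc y; rewrite -mulmxA; apply: SM.
suff Lall : forall v : 'rV_k, L v^T by move=> c y; rewrite -[c]trmxK; apply: Lall.
apply: subspace_full_of_annihilator => [|z ann].
  split=> [y|a b La Lb y|a v Lv y]; first by rewrite trmx0 mul0mx.
  - by rewrite linearD /= mulmxDl; apply: SD.
  - by rewrite linearZ /= -scalemxAl; apply: SZ.
pose W (v : 'rV_k) := forall c, L c -> v *m c = 0.
have sW : subspace W.
  split=> [c _|a b Wa Wb c Lc|a v Wv c Lc]; first by rewrite mul0mx.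
  - by rewrite mulmxDl Wa ?Wb ?addr0.
  - by rewrite -scalemxAl Wv ?scaler0.
have WK v i : W v -> W (v *m K i) by move=> Wv c Lc; rewrite -mulmxA; apply/Wv/LK.
have [Wall|] := K_irr sW WK.
  by have [a /eqP[]] := mx_nz_row u0; rewrite rowE; apply: Wall.
by apply=> c Lc; rewrite -[c]trmxK ann // trmxK.
Qed.

Lemma burnside_closure X : S X.
Proof.
have [k0|k_gt0] := posnP k.
  by have -> : X = 1%:M by apply/matrixP => i; have := ltn_ord i; rewrite {2}k0.
rewrite (matrix_sum_delta X); apply: big_ind => [||a _]; [exact: S0|exact: SD|].
apply: big_ind => [||b _]; [exact: S0|exact: SD|].
by apply: SZ; rewrite -(mul_delta_mx (0 : 'I_1)); apply: burnside_outer.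
Qed.

End Closure.

Theorem burnside : mx_generates K.
Proof. by move=> S S1 SD SM SZ SK; apply: burnside_closure. Qed.

End Burnside.

Section BlockPattern.
Variables (C : numClosedFieldType) (m d : nat) (blk : 'I_m -> 'I_d).
Local Notation M := 'M[C]_m.

Definition blk_part (X : M) : M :=
  \matrix_(a, b) if blk a == blk b then X a b else 0.

Fact blk_part_is_linear : linear blk_part.
Proof.
move=> c X Y; apply/matrixP=> a b; rewrite !mxE.
by case: ifP; rewrite ?mulr0 ?addr0.
Qed.

HB.instance Definition _ :=
  GRing.isLinear.Build C M M _ blk_part blk_part_is_linear.

Definition is_blk (X : M) : Prop := blk_part X = X.

Definition blk_proj (j : 'I_d) : M := diag_mx (\row_a (blk a == j)%:R).

Lemma blk_projE j a b : blk_proj j a b = ((a == b) && (blk a == j))%:R.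
Proof. by rewrite !mxE; case: (a == b); case: (blk a == j). Qed.

Lemma mul_blk_proj_mx j (X : M) a b :
  (blk_proj j *m X) a b = (blk a == j)%:R * X a b.
Proof. by rewrite mul_diag_mx !mxE. Qed.

Lemma mul_mx_blk_proj j (X : M) a b :
  (X *m blk_proj j) a b = X a b * (blk b == j)%:R.
Proof. by rewrite mul_mx_diag !mxE. Qed.

Lemma adjmx_blk_proj j : adjmx (blk_proj j) = blk_proj j.
Proof.
apply/matrixP=> a b; rewrite adjmxE !blk_projE eq_sym.
have [->|] := eqVneq a b; last by rewrite rmorph0.
by case: (blk b == j); rewrite ?rmorph1 ?rmorph0.
Qed.

Lemma blk_proj_mul j l :
  blk_proj j *m blk_proj l = if j == l then blk_proj j else 0.
Proof.
apply/matrixP=> a b; rewrite mul_blk_proj_mx !blk_projE.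
have [<-|jl] := eqVneq j l.
  rewrite blk_projE.
  by case: (blk a == j); case: (a == b); rewrite /= ?mul1r ?mul0r.
rewrite mxE; have [->|] := eqVneq (blk a) j; last by rewrite mul0r.
by rewrite (negbTE jl) andbF mulr0.
Qed.

Lemma blk_proj_idem j : blk_proj j *m blk_proj j = blk_proj j.
Proof. by rewrite blk_proj_mul eqxx. Qed.

Lemma sum_blk_proj : \sum_j blk_proj j = 1%:M.
Proof.
apply/matrixP=> a b; rewrite summxE [RHS]mxE.
under eq_bigr do rewrite blk_projE.
case: (a == b) => /=; last by rewrite big1.
rewrite (bigD1 (blk a)) //= eqxx big1 ?addr0 // => j /negbTE.
by rewrite eq_sym => ->.
Qed.

Lemma blk_partE (X : M) : blk_part X = \sum_j blk_proj j *m X *m blk_proj j.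
Proof.
apply/matrixP=> a b; rewrite summxE mxE.
under eq_bigr do rewrite mul_mx_blk_proj mul_blk_proj_mx.
have [e|ne] := eqVneq (blk a) (blk b).
  rewrite (bigD1 (blk a)) //= -e eqxx mul1r mulr1 big1 ?addr0 // => j.
  by rewrite eq_sym => /negbTE ->; rewrite !mul0r.
rewrite big1 // => j _; have [aj|] := eqVneq (blk a) j; last by rewrite !mul0r.
by rewrite -aj eq_sym (negbTE ne) mulr0.
Qed.

Lemma is_blkP (X : M) : is_blk X <-> forall a b, blk a != blk b -> X a b = 0.
Proof.
split=> [<- a b ne|X0]; first by rewrite mxE (negbTE ne).
by apply/matrixP=> a b; rewrite mxE; case: eqP => // /eqP /X0.
Qed.

Lemma is_blk_comm (X : M) :
  is_blk X <-> forall j, X *m blk_proj j = blk_proj j *m X.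
Proof.
rewrite is_blkP; split=> [X0 j|Xc a b ne].
  apply/matrixP=> a b; rewrite mul_blk_proj_mx mul_mx_blk_proj.
  have [->|ne] := eqVneq (blk a) (blk b); first by rewrite mulrC.
  by rewrite X0 // mulr0 mul0r.
have := congr1 (fun Z : M => Z a b) (Xc (blk b)).
by rewrite /= mul_blk_proj_mx mul_mx_blk_proj eqxx (negbTE ne) mulr1 mul0r.
Qed.

Lemma is_blk_part (X : M) : is_blk (blk_part X).
Proof. by apply/is_blkP=> a b ne; rewrite mxE (negbTE ne). Qed.

Lemma is_blk1 : is_blk 1%:M.
Proof.
apply/is_blkP=> a b; rewrite mxE.
by case: (eqVneq a b) => [->|]; rewrite ?eqxx.
Qed.

Lemma is_blk_delta (i : 'I_m) : is_blk (delta_mx i i).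
Proof.
apply/is_blkP=> a b; rewrite mxE.
by case: (eqVneq a i) => [->|]; case: (eqVneq b i) => [->|]; rewrite ?eqxx.
Qed.

Lemma is_blkM (X Y : M) : is_blk X -> is_blk Y -> is_blk (X *m Y).
Proof.
move=> /is_blk_comm Xc /is_blk_comm Yc; apply/is_blk_comm=> j.
by rewrite -mulmxA Yc mulmxA Xc mulmxA.
Qed.

Lemma blk_part_sandwich (P X : M) :
  is_blk P -> blk_part (P *m X *m P) = P *m blk_part X *m P.
Proof.
move=> /is_blk_comm Pc; rewrite !blk_partE mulmx_sumr mulmx_suml.
by apply: eq_bigr => j _; rewrite -!mulmxA Pc !mulmxA Pc.
Qed.

End BlockPattern.

Lemma delta_sandwichE (R : pzRingType) k l r (A : 'M[R]_(k, l))
    (B : 'M[R]_(l, r)) a b i j :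
  (A *m delta_mx a b *m B) i j = A i a * B b j.
Proof.
rewrite -(mul_delta_mx (0 : 'I_1)) mulmxA -colE -mulmxA -rowE.
by rewrite mxE big_ord1 !mxE.
Qed.

Section Choi.
Variables (C : numClosedFieldType) (m : nat).
Local Notation Rank := (@tagnat.Rank m (fun _ => m)).

Lemma mxblock_entry (B : 'I_m -> 'I_m -> 'M[C]_m) a b i j :
  (\mxblock_(a0 < m, b0 < m) B a0 b0) (Rank a i) (Rank b j) = B a b i j.
Proof. by rewrite -[B a b](mxblockK B) [RHS]mxE. Qed.

Definition choi_kraus (Z : 'M[C]_(\sum_(a < m) m)) r : 'M[C]_m :=
  \matrix_(b, t) Z r (Rank b t).

Lemma choi_krausE (f : {linear 'M[C]_m -> 'M[C]_m}) Z :
  \mxblock_(a < m, b < m) f (delta_mx a b) = adjmx Z *m Z ->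
  forall X, f X = \sum_r adjmx (choi_kraus Z r) *m X *m choi_kraus Z r.
Proof.
move=> choiZ X; apply/matrixP => i j.
have fE a b : f (delta_mx a b) i j = \sum_r (Z r (Rank a i))^* * Z r (Rank b j).
  rewrite -(mxblock_entry (fun a b => f (delta_mx a b))) choiZ mxE.
  by apply: eq_bigr => r _; rewrite adjmxE.
have krausE r : (adjmx (choi_kraus Z r) *m X *m choi_kraus Z r) i j =
    \sum_a \sum_b X a b * ((Z r (Rank a i))^* * Z r (Rank b j)).
  rewrite {1}(matrix_sum_delta X) mulmx_sumr mulmx_suml summxE.
  apply: eq_bigr => a _.
  rewrite mulmx_sumr mulmx_suml summxE; apply: eq_bigr => b _.
  by rewrite -scalemxAr -scalemxAl mxE delta_sandwichE adjmxE !mxE.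
rewrite summxE (eq_bigr _ (fun r _ => krausE r)) exchange_big.
rewrite {1}(matrix_sum_delta X) linear_sum summxE; apply: eq_bigr => a _.
rewrite linear_sum summxE exchange_big; apply: eq_bigr => b _.
by rewrite linearZ mxE fE mulr_sumr.
Qed.

End Choi.

Section BlockChoi.
Variables (C : numClosedFieldType) (m d : nat).
Variables (blk : 'I_m -> 'I_d) (rep : 'I_d -> 'I_m).
Hypothesis blk_rep : cancel rep blk.
Local Notation Rank := (@tagnat.Rank m (fun _ => m)).
Local Notation sig1 := (@tagnat.sig1 m (fun _ => m)).
Local Notation sig2 := (@tagnat.sig2 m (fun _ => m)).

(* The Choi matrix of blk_part is the sum over the blocks j of v_j v_j^*, with
   v_j the sum of e_a (x) e_a over blk a = j; row Rank (rep j) (rep j) of the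
   factor holds v_j^*. *)
Lemma blk_part_choi_psd :
  psdmx (\mxblock_(a < m, b < m) blk_part blk (delta_mx a b : 'M[C]_m)).
Proof.
pose R j := Rank (rep j) (rep j).
have R_inj : injective R.
  move=> j l /(congr1 sig1); rewrite !tagnat.Rank1K => /(congr1 blk).
  by rewrite !blk_rep.
have sig2_Rank a (i : 'I_m) : sig2 (Rank a i) = i.
  by apply: val_inj; rewrite tagnat.Rank2K.
exists (\matrix_(r, t) ((r == R (blk (sig1 t))) && (sig2 t == sig1 t))%:R).
apply/matrixP => s t; rewrite -(tagnat.sig2K s) -(tagnat.sig2K t).
move: (sig1 s) (sig2 s) (sig1 t) (sig2 t) => a i b j.
rewrite mxblock_entry mxE [RHS]mxE.
rewrite (eq_bigr (fun r => ((r == R (blk a)) && (i == a))%:R *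
                           ((r == R (blk b)) && (j == b))%:R)); last first.
  by move=> r _; rewrite adjmxE !mxE !tagnat.Rank1K !sig2_Rank conjC_nat.
rewrite mxE; have [->|ia] := eqVneq i a; last first.
  rewrite big1 /=; last by move=> r _; rewrite andbF mul0r.
  by case: ifP => // _; rewrite mxE (negbTE ia).
have [->|jb] := eqVneq j b; last first.
  rewrite big1 /=; last by move=> r _; rewrite andbF mulr0.
  by case: ifP => // _; rewrite mxE (negbTE jb) andbF.
pose F r := ((r == R (blk a)) && (r == R (blk b)))%:R : C.
rewrite (eq_bigr F); last first.
  by move=> r _; rewrite /F ?eqxx !andbT; case: (r == _); case: (r == _);
     rewrite ?mulr1 ?mulr0 ?mul0r.
rewrite (bigD1 (R (blk a)) (F := F)) //= /F.
rewrite [X in _ + X]big1 ?addr0 => [|r /negbTE ->] //.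
by rewrite !eqxx (inj_eq R_inj) eq_sym; case: eqP.
Qed.

End BlockChoi.

Section Irreducible.
Variables (C : numClosedFieldType) (k : nat).
Implicit Types (B : 'M[C]_k -> Prop) (f : 'M[C]_k -> 'M[C]_k).

Definition irreducible B f : Prop :=
  ~ exists P : 'M[C]_k,
      [/\ B P, projmx P, P <> 0, P <> 1%:M &
          forall X, B X -> exists Y, B Y /\ f (P *m X *m P) = P *m Y *m P].

Lemma irreducible_ext B B' f g :
  (forall X, B X <-> B' X) -> f =1 g -> irreducible B f -> irreducible B' g.
Proof.
move=> BB' fg irr [P [BP pP P0 P1 PfP]]; apply: irr.
exists P; split => //; first exact/BB'.
move=> X /BB' /PfP [Y [BY e]]; exists Y; split; first exact/BB'.
by rewrite fg.
Qed.

(* With Q = 1 - P, the identity gives sum_i (P A_i Q)^* (P A_i Q) = Q P Y P Q = 0,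
   so P X Q = 0 on the algebra generated by the A_i, that is, everywhere. *)
Lemma kraus_proj_trivial (I : finType) (A : I -> 'M[C]_k) (P Y : 'M[C]_k) :
  mx_generates A -> projmx P ->
  \sum_i adjmx (A i) *m P *m A i = P *m Y *m P -> P = 0 \/ P = 1%:M.
Proof.
move=> gA [aP PP] AP; set Q := 1%:M - P.
have aQ : adjmx Q = Q by rewrite adjmxB adjmx1 aP.
have PQ : P *m Q = 0 by rewrite mulmxBr mulmx1 PP subrr.
have QP : Q *m P = 0 by rewrite mulmxBl mul1mx PP subrr.
have PQ1 : P + Q = 1%:M by rewrite addrC subrK.
clearbody Q.
have PAQ : forall i, P *m A i *m Q = 0.
  apply: sum_adjmx_mul_eq0.
  transitivity (Q *m (\sum_i adjmx (A i) *m P *m A i) *m Q).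
    rewrite mulmx_sumr mulmx_suml; apply: eq_bigr => i _.
    by rewrite !adjmxM aQ aP !mulmxA -(mulmxA _ P P) PP.
  by rewrite AP !mulmxA QP !mul0mx.
have PXQ : forall X, P *m X *m Q = 0.
  apply: gA => [|x y Px Py|x y Px Py|c x Px|//]; first by rewrite mulmx1.
  - by rewrite mulmxDr mulmxDl Px Py addr0.
  - have -> : P *m (x *m y) *m Q = P *m x *m (P + Q) *m y *m Q.
      by rewrite PQ1 mulmx1 !mulmxA.
    rewrite mulmxDr !mulmxDl Px !mul0mx addr0.
    by rewrite -!mulmxA (mulmxA P y) Py !mulmx0.
  - by rewrite -scalemxAr -scalemxAl Px scaler0.
have [->|/mx_nz_entry [r [a Pra]]] := eqVneq P 0; [by left | right].
suff Q0 : Q = 0 by rewrite -PQ1 Q0 addr0.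
apply/matrixP => b s.
have /eqP := congr1 (fun Z : 'M[C]_k => Z r s) (PXQ (delta_mx a b)).
by rewrite /= delta_sandwichE mxE mulf_eq0 (negbTE Pra) => /eqP ->; rewrite mxE.
Qed.

Lemma generating_kraus_irreducible B f (I : finType) (A : I -> 'M[C]_k) :
  mx_generates A -> B 1%:M ->
  (forall X, B X -> f X = \sum_i adjmx (A i) *m X *m A i) -> irreducible B f.
Proof.
move=> gA B1 fA [P [BP pP P0 P1 /(_ _ B1) [Y [_ fP]]]].
have : \sum_i adjmx (A i) *m P *m A i = P *m Y *m P.
  by rewrite -fA // -fP mulmx1 pP.2.
by case/(kraus_proj_trivial gA pP).
Qed.

Lemma kraus_reindex (I : finType) (F : I -> 'M[C]_k) : mx_generates F ->
  exists p (A : 'I_p -> 'M[C]_k), generates_full A /\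
    forall X, \sum_i adjmx (F i) *m X *m F i =
              \sum_(i < p) adjmx (A i) *m X *m A i.
Proof.
move=> gF; exists #|I|, (F \o enum_val); split.
  move=> S S1 SD SM SZ SA; apply: gF => // i.
  by rewrite -(enum_rankK i); apply: SA.
by move=> X; rewrite (big_enum_val (fun i => adjmx (F i) *m X *m F i)).
Qed.

End Irreducible.

Section Extension.
Variables (C : numClosedFieldType) (m d : nat) (blk : 'I_m -> 'I_d).
Variable tau : {linear 'M[C]_m -> 'M[C]_m}.
Hypothesis tau_blk : forall X, is_blk blk X -> is_blk blk (tau X).
Local Notation M := 'M[C]_m.
Local Notation E := (blk_proj C blk).

Lemma irreducible_restrict :
  irreducible (fun _ => True) (tau \o blk_part blk) ->
  irreducible (is_blk blk) tau.
Proof.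
move=> irr [P [AP pP P0 P1 PtauP]]; apply: irr; exists P; split => // X _.
have [Y [_ e]] := PtauP _ (is_blk_part blk X).
by exists Y; split => //=; rewrite blk_part_sandwich.
Qed.

Lemma reducible_of_zero : (1 < m)%N -> (forall X, tau (blk_part blk X) = 0) ->
  ~ irreducible (is_blk blk) tau.
Proof.
move=> m_gt1 tau0; pose t0 := Ordinal (ltnW m_gt1); pose t1 := Ordinal m_gt1.
have A0 := is_blk_delta C blk t0.
apply; exists (delta_mx t0 t0); split => //.
- by rewrite /projmx adjmx_delta mul_delta_mx.
- by move/matrixP/(_ t0 t0); rewrite !mxE eqxx => /eqP; rewrite oner_eq0.
- by move/matrixP/(_ t1 t1); rewrite !mxE eqxx => /eqP; rewrite eq_sym oner_eq0.
move=> X AX; exists 0; split; first by apply/is_blkP => a b _; rewrite mxE.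
by rewrite -[_ *m X *m _](is_blkM (is_blkM A0 AX) A0) tau0 mulmx0 mul0mx.
Qed.

Section BlockKraus.
Variables (I : finType) (L : I -> M) (lo hi : I -> 'I_d).
Hypothesis L_blk : forall x, L x = E (lo x) *m L x *m E (hi x).
Hypothesis tau_kraus :
  forall X, tau (blk_part blk X) = \sum_x adjmx (L x) *m X *m L x.

Lemma blk_proj_kraus x : E (lo x) *m L x = L x.
Proof. by rewrite {1}L_blk !mulmxA blk_proj_idem -L_blk. Qed.

Lemma kraus_blk_proj x j : L x *m E j = if hi x == j then L x else 0.
Proof.
rewrite {1}L_blk -!mulmxA blk_proj_mul.
by case: eqP => _; rewrite ?mulmx0 // !mulmxA -L_blk.
Qed.

(* The orthogonal projection onto W lies in the block algebra because W is
   stable under the self-adjoint blk_proj j, and it reduces tau because W is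
   stable under every Kraus operator. *)
Lemma reducible_of_invariant (W : 'rV[C]_m -> Prop) (v y : 'rV[C]_m) :
  subspace W -> (forall u x, W u -> W (u *m L x)) ->
  (forall u j, W u -> W (u *m E j)) -> W v -> v != 0 -> ~ W y ->
  ~ irreducible (is_blk blk) tau.
Proof.
move=> sW WL WE Wv v0 Wy; apply.
have [Wm WmP] := subspace_mx sW.
have [Q oQ] := orthoproj_exists Wm; have [aQ QQ QW QA] := oQ.
have Wm_stable N : (forall u, W u -> W (u *m N)) -> stablemx Wm N.
  by move=> WN; apply/row_subP => i; rewrite row_mul; apply/WmP/WN/WmP/row_sub.
have QLQ x : Q *m L x *m Q = Q *m L x.
  by apply: orthoproj_stable oQ _; apply: Wm_stable => u /WL.
have QLaQ x : adjmx (L x) *m Q = Q *m adjmx (L x) *m Q.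
  by have := congr1 (@adjmx _ _ _) (QLQ x); rewrite !adjmxM aQ mulmxA => ->.
have AQ : is_blk blk Q.
  apply/is_blk_comm => j; symmetry.
  apply: orthoproj_stable_comm oQ (adjmx_blk_proj _ _ _) _.
  by apply: Wm_stable => u /WE.
exists Q; split => //.
- by move=> Q0; case/eqP: v0; rewrite -(QA _ v) ?Q0 ?mulmx0 //; apply/WmP.
- move=> Q1; apply: Wy; apply/WmP; rewrite -(mulmx1 y) -Q1.
  exact: submx_trans (submxMl y Q) QW.
move=> X AX; have QXQ : is_blk blk (Q *m X *m Q) by apply/is_blkM/AQ/is_blkM.
exists (tau (Q *m X *m Q)); split; first exact: tau_blk.
rewrite -QXQ tau_kraus mulmx_sumr mulmx_suml; apply: eq_bigr => x _.
transitivity ((adjmx (L x) *m Q) *m X *m (Q *m L x)); first by rewrite !mulmxA.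
by rewrite QLaQ -(QLQ x) !mulmxA.
Qed.

Section Saturation.
Variable V : 'rV[C]_m -> Prop.
Hypotheses (sV : subspace V) (VL : forall v x, V v -> V (v *m L x)).

Definition blk_hull u := forall j, exists2 v, V v & u *m E j = v *m E j.

Definition blk_core u := forall j, V (u *m E j).

Let V0 : V 0. Proof. by case: sV. Qed.

Lemma blk_hull_subspace : subspace blk_hull.
Proof.
case: sV => _ VD VZ; split=> [j|u1 u2 h1 h2 j|c u h j].
- by exists 0; rewrite ?mul0mx.
- have [v1 V1 e1] := h1 j; have [v2 V2 e2] := h2 j.
  by exists (v1 + v2); [apply: VD | rewrite !mulmxDl e1 e2].
- have [v Vv e] := h j.
  by exists (c *: v); [apply: VZ | rewrite -!scalemxAl e].
Qed.

Lemma blk_hull_sup v : V v -> blk_hull v.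
Proof. by move=> Vv j; exists v. Qed.

Lemma blk_hull_kraus u x : blk_hull u -> V (u *m L x).
Proof.
case/(_ (lo x)) => v Vv uv.
by rewrite -blk_proj_kraus mulmxA uv -mulmxA blk_proj_kraus; apply: VL.
Qed.

Lemma blk_hull_stable_kraus u x : blk_hull u -> blk_hull (u *m L x).
Proof. by move=> hu j; exists (u *m L x) => //; apply: blk_hull_kraus. Qed.

Lemma blk_hull_stable_proj u l : blk_hull u -> blk_hull (u *m E l).
Proof.
move=> hu j; rewrite -mulmxA blk_proj_mul; case: eqP => [<-|_]; first exact: hu.
by exists 0; rewrite ?mulmx0 ?mul0mx.
Qed.

Lemma blk_core_subspace : subspace blk_core.
Proof.
case: sV => _ VD VZ; split=> [j|u1 u2 h1 h2 j|c u h j].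
- by rewrite mul0mx.
- by rewrite mulmxDl; apply: VD.
- by rewrite -scalemxAl; apply: VZ.
Qed.

Lemma blk_core_sub u : blk_core u -> V u.
Proof.
move=> cu; rewrite -[u]mulmx1 -(sum_blk_proj C blk) mulmx_sumr.
by case: sV => _ VD _; apply: big_ind => // j _; apply: cu.
Qed.

Lemma blk_core_stable_kraus u x : blk_core u -> blk_core (u *m L x).
Proof.
move=> cu j; rewrite -mulmxA kraus_blk_proj.
case: eqP => _; last by rewrite mulmx0.
by rewrite -blk_proj_kraus mulmxA; apply: VL.
Qed.

Lemma blk_core_stable_proj u l : blk_core u -> blk_core (u *m E l).
Proof.
move=> cu j; rewrite -mulmxA blk_proj_mul; case: eqP => _; first exact: cu.
by rewrite mulmx0.
Qed.

Lemma kraus_eq0_of_saturated :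
  (forall u, blk_hull u) -> (forall u, blk_core u -> u = 0) -> forall x, L x = 0.
Proof.
move=> hull core0 x; apply/row_matrixP => i; rewrite row0 rowE; apply: core0 => j.
rewrite -mulmxA kraus_blk_proj; case: eqP => _; last by rewrite mulmx0.
exact: blk_hull_kraus.
Qed.

End Saturation.

(* An invariant subspace V gives the invariant subspaces blk_core V <= V <=
   blk_hull V, which are also stable under the blk_proj j; if neither is
   proper and nonzero, all the Kraus operators vanish. *)
Lemma kraus_no_invariant_subspace :
  irreducible (is_blk blk) tau -> no_invariant_subspace L.
Proof.
move=> irr V sV VL; have [|/not_all_ex_not [y Vy]] := classic (forall v, V v).
  by left.
right=> v Vv; apply: NNPP => /eqP v0.
have [hull|] := classic (forall u, blk_hull V u); last first.
  move=> /not_all_ex_not [u hu].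
  apply: (reducible_of_invariant (blk_hull_subspace sV) _ _
            (blk_hull_sup Vv) v0 hu irr).
    by move=> ? ?; apply: blk_hull_stable_kraus.
  by move=> ? ?; apply: blk_hull_stable_proj.
have [core0|] := classic (forall u, blk_core V u -> u = 0).
  apply: (reducible_of_zero (subspace_nontrivial_dim sV Vv v0 Vy) _ irr) => X.
  rewrite tau_kraus big1 // => x _.
  by rewrite (kraus_eq0_of_saturated sV VL hull core0) mulmx0.
move=> /not_all_ex_not [u not_core].
have [cu /eqP u0] := imply_to_and _ _ not_core.
apply: (reducible_of_invariant (blk_core_subspace sV) _ _ cu u0 _ irr).
- by move=> ? ?; apply: blk_core_stable_kraus.
- by move=> ? ?; apply: blk_core_stable_proj.
- by move=> /(blk_core_sub sV) /Vy.
Qed.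

End BlockKraus.

Definition blk_cut (I : finType) (K : I -> M) (x : I * 'I_d * 'I_d) : M :=
  E x.1.2 *m K x.1.1 *m E x.2.

Lemma blk_cut_blk (I : finType) (K : I -> M) x :
  blk_cut K x = E x.1.2 *m blk_cut K x *m E x.2.
Proof. by rewrite /blk_cut !mulmxA blk_proj_idem -!mulmxA blk_proj_idem. Qed.

(* Since tau maps the block algebra into itself, tau \o blk_part equals
   blk_part \o tau \o blk_part, and expanding both blk_part gives the cuts. *)
Lemma kraus_blk_cut (I : finType) (K : I -> M) :
  (forall X, tau (blk_part blk X) = \sum_i adjmx (K i) *m X *m K i) ->
  forall X, tau (blk_part blk X) = \sum_x adjmx (blk_cut K x) *m X *m blk_cut K x.
Proof.
move=> tauK X.
have -> : tau (blk_part blk X) =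
    blk_part blk (tau (blk_part blk (blk_part blk X))).
  by rewrite (is_blk_part blk X) (tau_blk (is_blk_part blk X)).
transitivity (\sum_(l < d) \sum_i \sum_(j < d)
    adjmx (blk_cut K (i, j, l)) *m X *m blk_cut K (i, j, l)).
  rewrite tauK (blk_partE _ X) blk_partE; apply: eq_bigr => l _.
  rewrite mulmx_sumr mulmx_suml; apply: eq_bigr => i _.
  rewrite !(mulmx_sumr, mulmx_suml); apply: eq_bigr => j _.
  by rewrite /blk_cut !adjmxM !adjmx_blk_proj !mulmxA.
rewrite exchange_big; under eq_bigr do rewrite exchange_big.
rewrite (pair_bigA _ (fun i j => \sum_(l < d)
    adjmx (blk_cut K (i, j, l)) *m X *m blk_cut K (i, j, l))).
rewrite (pair_bigA _ (fun ij l =>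
    adjmx (blk_cut K (ij, l)) *m X *m blk_cut K (ij, l))).
by apply: eq_bigr => -[[]].
Qed.

Lemma irreducible_generating_kraus (Z : 'M[C]_(\sum_(a < m) m)) :
  \mxblock_(a < m, b < m) tau (blk_part blk (delta_mx a b)) = adjmx Z *m Z ->
  irreducible (is_blk blk) tau ->
  exists p (A : 'I_p -> M), generates_full A /\
    forall X, tau (blk_part blk X) = \sum_(i < p) adjmx (A i) *m X *m A i.
Proof.
move=> choiZ irr.
have tauK := kraus_blk_cut (choi_krausE (f := tau \o blk_part blk) choiZ).
have gen := burnside (kraus_no_invariant_subspace (blk_cut_blk _) tauK irr).
have [p [A [gA KA]]] := kraus_reindex gen.
by exists p, A; split => // X; rewrite tauK KA.
Qed.

End Extension.

Section BlockDiagonal.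
Variables (C : numClosedFieldType) (d : nat) (n : 'I_d -> nat).
Local Notation m := (\sum_(i < d) n i).
Local Notation blk := (@tagnat.sig1 d n).

Lemma blockdiag_partE (X : 'M[C]_m) : blockdiag_part X = blk_part blk X.
Proof.
apply/matrixP=> i j; rewrite /blockdiag_part /mxdiag !mxE.
case: eqP => [e|_]; last by rewrite mxE.
suff sub_blockE a b (e' : a = b) (s : 'I_(n a)) (t : 'I_(n b)) :
    conform_mx 0 (submxblock X a a) s t = X (tagnat.Rank a s) (tagnat.Rank b t).
  by rewrite (sub_blockE _ _ e) !tagnat.sig2K.
by subst b; rewrite conform_mx_id mxE.
Qed.

Lemma in_blockdiagE (X : 'M[C]_m) : in_blockdiag X <-> is_blk blk X.
Proof. by rewrite /in_blockdiag /is_blk blockdiag_partE. Qed.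

Lemma blockdiag_choi_psd (npos : forall i, (0 < n i)%N)
    (tau : 'M[C]_m -> 'M[C]_m) :
  completely_positive_on (@in_blockdiag C d n) tau ->
  psdmx (\mxblock_(a < m, b < m) tau (blk_part blk (delta_mx a b))).
Proof.
move=> cp.
have -> : \mxblock_(a < m, b < m) tau (blk_part blk (delta_mx a b)) =
    \mxblock_(a < m, b < m) tau (blockdiag_part (delta_mx a b)).
  by apply: eq_mxblock => a b; rewrite blockdiag_partE.
apply: cp => [a b|].
  by apply/in_blockdiagE; rewrite blockdiag_partE; apply: is_blk_part.
under eq_mxblock do rewrite blockdiag_partE.
apply: (@blk_part_choi_psd C _ _ blk (fun j => tagnat.Rank j (Ordinal (npos j)))).
by move=> j; rewrite tagnat.Rank1K.
Qed.

End BlockDiagonal.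

Theorem theorem5p10 (C : numClosedFieldType) (d : nat) (n : 'I_d -> nat)
  (npos : forall i, (0 < n i)%N)
  (tau : {linear 'M[C]_(\sum_(i < d) n i) -> 'M[C]_(\sum_(i < d) n i)})
  (tau_A : forall X, in_blockdiag X -> in_blockdiag (tau X))
  (tau_cp : completely_positive_on (@in_blockdiag C d n) tau) :
  let tauT := fun X => tau (blockdiag_part X) in
  [<-> irreducible_on (@in_blockdiag C d n) tau;
       irreducible_on (fun _ => True) tauT;
       exists (p : nat) (A : 'I_p -> 'M[C]_(\sum_(i < d) n i)),
         generates_full A /\
         forall X, tauT X = \sum_(i < p) adjmx (A i) *m X *m A i;
       exists (p : nat) (A : 'I_p -> 'M[C]_(\sum_(i < d) n i)),
         generates_full A /\
         forall X, in_blockdiag X -> tau X = \sum_(i < p) adjmx (A i) *m X *m A i].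
Proof.
move=> tauT; set blk := @tagnat.sig1 d n.
have tauTE X : tauT X = tau (blk_part blk X) by rewrite /tauT blockdiag_partE.
have tau_blk X : is_blk blk X -> is_blk blk (tau X).
  by move/in_blockdiagE/tau_A/in_blockdiagE.
have [Z choiZ] := blockdiag_choi_psd npos tau_cp.
have irrA :
    irreducible_on (@in_blockdiag C d n) tau <-> irreducible (is_blk blk) tau.
  by split; apply: irreducible_ext => // X; rewrite in_blockdiagE.
have irrM : irreducible_on (fun _ => True) tauT <->
    irreducible (fun _ => True) (tau \o blk_part blk).
  by split; apply: irreducible_ext => // X.
tfae.
- move/irrA/(irreducible_generating_kraus tau_blk choiZ) => [p [A [gA tauA]]].
  by apply/irrM; apply: (generating_kraus_irreducible gA) => // X _; apply: tauA.
- move/irrM/irreducible_restrict/(irreducible_generating_kraus tau_blk choiZ).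
  by move=> [p [A [gA tauA]]]; exists p, A; split => // X; rewrite tauTE.
- move=> [p [A [gA tauTA]]]; exists p, A; split => // X AX.
  by rewrite -tauTA /tauT AX.
- move=> [p [A [gA tauA]]]; apply/irrA.
  apply: (generating_kraus_irreducible gA) => [|X /in_blockdiagE].
    exact: is_blk1.
  exact: tauA.
Qed.
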